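(* Let $G$ be a finite group and $H$ a normal subgroup of $G$ such that $G/H$ is cyclic of order $n$. For each divisor $d$ of $n$, let $K_d$ be the unique subgroup of $G$ containing $H$ with $|K_d:H|=d$, let $\Gamma_d$ be a coset of $H$ whose order in $G/H$ is $d$, let $T_d$ be the number of $G$-conjugacy classes contained in $\Gamma_d$, let $S_d$ be the number of $G$-conjugacy classes contained in $K_d$, and let $S^*_d$ be the number of conjugacy classes of the group $K_d$ (under its own conjugation action). Then for every divisor $d$ of $n$: (1) $\displaystyle S^*_d=n\sum_{c\mid n}\sum_{a\mid c}\mu(c/a)\frac{\gcd(a,d)}{\operatorname{lcm}(a,d)}T_c$; (2) $\displaystyle S^*_d=n\sum_{c\mid n}\sum_{a\mid c}\sum_{b\mid c}\frac{\mu(c/a)\mu(c/b)}{\phi(c)}\frac{\gcd(a,d)}{\operatorname{lcm}(a,d)}S_b$, where $\mu$ is the Möbius function and $\phi$ is Euler's totient function.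
   Context: $T_d$ does not depend on the choice of the coset $\Gamma_d$ of order $d$ in $G/H$. All sums are over positive divisors. *)

From mathcomp Require Import all_boot all_order all_algebra all_fingroup all_solvable.
Set Implicit Arguments. Unset Strict Implicit. Unset Printing Implicit Defensive.
Import GRing.Theory Num.Theory.

(* Moebius function on positive integers (mu 0 := 0 by convention; unused):
   mu n = (-1)^k if n is a product of k distinct primes, 0 otherwise. *)
Definition moebius (n : nat) : int :=
  if n == 0%N then 0%R
  else if all (fun p => logn p n == 1%N) (primes n)
       then ((-1) ^+ size (primes n))%R
       else 0%R.

Definition nclasses_in (gT : finGroupType) (G : {set gT}) (A : {set gT}) : nat :=
  #|[set C in classes G | C \subset A]|.

(* Burnside's lemma turns class numbers into counts of commuting pairs: if A is a
   union of cosets of H, stable under conjugation by L with H <= L <= G, then |L|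
   times the number of L-classes in A is the number of commuting pairs in A x L.
   Write G/H = <g0> and let E(i, j) be the number of commuting pairs in
   g0^i H x g0^j H.  As y |-> x y maps the elements of g0^j H commuting with x onto
   those of g0^(i+j) H, E is invariant under (i, j) |-> (i, i + j) and under
   (i, j) |-> (j, i), so E(i, j) only depends on gcd(i, j, n).  Moebius inversion
   over the divisors of n then expresses n T_c, n S_b and d S*_d as sums over m | n
   of a common weight w_m times [c | m] m, gcd(b, m) m and gcd(d, m)^2.  Formula (1)
   follows by a second Moebius inversion, and (2) from (1) since
   sum_(b | c) mu(c/b) gcd(b, m) = phi(c) [c | m]. *)

From mathcomp Require Import all_boot all_order all_algebra all_fingroup all_solvable.
From mathcomp Require Import zify ring.
Import GRing.Theory Num.Theory.
Set Implicit Arguments. Unset Strict Implicit. Unset Printing Implicit Defensive.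

Section BigDivisors.
Variable R : nmodType.
(* [\sum] would parse the divisibility filters in ring_scope. *)
Local Notation "\big_ ( i <- r | P ) F" := (\big[+%R/0%R]_(i <- r | P) F)
  (at level 36, F at level 36, i, r at level 50).
Local Notation "\big_ ( i <- r ) F" := (\big[+%R/0%R]_(i <- r) F)
  (at level 36, F at level 36, i, r at level 50).

Lemma big_divisors_ord m (F : nat -> R) : 0 < m ->
  \big_(d <- divisors m) F d = \big[+%R/0%R]_(d < m.+1 | d %| m) F d.
Proof.
move=> m_gt0; rewrite -(big_mkord (dvdn^~ m)) -[RHS]big_filter.
apply: perm_big; apply: uniq_perm; rewrite ?filter_uniq ?divisors_uniq ?iota_uniq //.
move=> d; rewrite !mem_filter mem_index_iota -dvdn_divisors //.
by case dm: (d %| m); rewrite //= ltnS dvdn_leq.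
Qed.

Lemma big_divisors_dvd m c (P : pred nat) (F : nat -> R) : 0 < m -> c %| m ->
  \big_(a <- divisors c | P a) F a = \big_(a <- divisors m | (a %| c) && P a) F a.
Proof.
move=> m_gt0 cm; have c_gt0 := dvdn_gt0 m_gt0 cm.
rewrite -big_filter -[RHS]big_filter.
apply: perm_big; apply: uniq_perm; rewrite ?filter_uniq ?divisors_uniq // => a.
rewrite !mem_filter -!dvdn_divisors // andbC -andbA; apply: andb_id2l => ac.
by rewrite (dvdn_trans ac cm) andbT.
Qed.

Lemma big_divisors_rev m (F : nat -> R) : 0 < m ->
  \big_(d <- divisors m) F (m %/ d) = \big_(d <- divisors m) F d.
Proof.
move=> m_gt0; rewrite -(big_map (divn m) xpredT).
have divnK' d : d %| m -> m %/ (m %/ d) = d by move=> dm; rewrite divnA // mulKn.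
apply: perm_big; apply: uniq_perm; rewrite ?divisors_uniq //.
  rewrite map_inj_in_uniq ?divisors_uniq // => d e.
  by rewrite -!dvdn_divisors // => dm em de; rewrite -(divnK' d) // de divnK'.
move=> d; apply/mapP/idP => [[e] | ].
  by rewrite -!dvdn_divisors // => em ->; apply: dvdn_div.
rewrite -dvdn_divisors // => dm.
by exists (m %/ d); rewrite ?divnK' // -dvdn_divisors // dvdn_div.
Qed.

Lemma big_divisors_mul m a (F : nat -> R) : 0 < m -> a %| m ->
  \big_(c <- divisors m | a %| c) F c = \big_(s <- divisors (m %/ a)) F (a * s).
Proof.
move=> m_gt0 am; have a_gt0 := dvdn_gt0 m_gt0 am.
have ma_gt0 : 0 < m %/ a by rewrite divn_gt0 // dvdn_leq.
rewrite -(big_map (muln a) xpredT) -[LHS]big_filter.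
apply: perm_big; apply: uniq_perm; rewrite ?filter_uniq ?divisors_uniq //.
  by rewrite map_inj_uniq ?divisors_uniq // => x y /eqP; rewrite eqn_pmul2l // => /eqP.
move=> c; rewrite mem_filter -dvdn_divisors //; apply/andP/mapP => [[/dvdnP[s ->] sam] | [s]].
  by exists s; rewrite 1?mulnC // -dvdn_divisors // dvdn_divRL.
rewrite -dvdn_divisors // dvdn_divRL // mulnC => sam ->.
by rewrite dvdn_mulr.
Qed.

Lemma exchange_big_divisors m (F : nat -> nat -> R) : 0 < m ->
  \big_(c <- divisors m) \big_(a <- divisors c) F c a =
  \big_(a <- divisors m) \big_(c <- divisors m | a %| c) F c a.
Proof.
move=> m_gt0; rewrite (exchange_big_dep xpredT) //=; apply: eq_big_seq => c.
rewrite -dvdn_divisors // => cm; rewrite (big_divisors_dvd _ _ m_gt0 cm).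
by apply: eq_bigl => a; rewrite andbT.
Qed.

End BigDivisors.

Lemma moebius_mul_prime p s : prime p -> 0 < s ->
  moebius (p * s) = if p %| s then 0%R else (- moebius s)%R.
Proof.
move=> p_pr s_gt0; have p_gt0 := prime_gt0 p_pr.
have ps_gt0 : 0 < p * s by rewrite muln_gt0 p_gt0.
have logn_ps : logn p (p * s) = (logn p s).+1 by rewrite lognM // logn_prime // eqxx.
rewrite /moebius muln_eq0 !gtn_eqF //=; case: (ifPn (p %| s)) => [p_s | p'_s].
  case: allP => // /(_ p); rewrite mem_primes p_pr ps_gt0 dvdn_mulr //.
  rewrite logn_ps eqSS => /(_ isT) /eqP p's.
  by have := logn_gt0 p s; rewrite p's mem_primes p_pr s_gt0 p_s.
have p'_s0 : logn p s = 0 by apply/eqP; rewrite -leqn0 leqNgt logn_gt0 mem_primes p_pr s_gt0 p'_s.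
have perm_ps : perm_eq (primes (p * s)) (p :: primes s).
  apply: uniq_perm; rewrite ?primes_uniq //=.
    by rewrite primes_uniq mem_primes p_pr s_gt0 (negPf p'_s).
  by move=> q; rewrite primesM // primes_prime // !inE.
rewrite (perm_all _ perm_ps) (perm_size perm_ps) /= logn_ps p'_s0 eqxx /=.
have -> : all (fun q => logn q (p * s) == 1) (primes s) = all (fun q => logn q s == 1) (primes s).
  apply: eq_in_all => q; rewrite mem_primes => /and3P[q_pr _ q_s].
  have q'p : (q == p) = false by apply: contraNF p'_s => /eqP <-.
  by rewrite lognM // logn_prime // q'p.
by case: ifP => _; rewrite ?oppr0 // exprS mulN1r.
Qed.

Lemma sum_moebius_divisors (R : ringType) m : 0 < m ->
  (\sum_(d <- divisors m) (moebius d)%:~R = (m == 1)%:R :> R)%R.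
Proof.
move=> m_gt0; have [-> | m_neq1] := eqVneq m 1.
  have -> : divisors 1 = [:: 1] by [].
  by rewrite big_seq1.
have m_gt1 : 1 < m by rewrite ltn_neqAle eq_sym m_neq1.
have [p p_pr p_m] : exists2 p, prime p & p %| m.
  by exists (pdiv m); [exact: pdiv_prime | exact: pdiv_dvd].
have p_gt0 := prime_gt0 p_pr.
have mp_gt0 : 0 < m %/ p by rewrite divn_gt0 // dvdn_leq.
have mp_m : m %/ p %| m by rewrite dvdn_div.
rewrite (bigID (dvdn p)) /= big_divisors_mul //.
have -> : (\sum_(s <- divisors (m %/ p)) (moebius (p * s))%:~R =
           \sum_(s <- divisors (m %/ p) | ~~ (p %| s)%N) - (moebius s)%:~R :> R)%R.
  rewrite [RHS]big_mkcond; apply: eq_big_seq => s; rewrite -dvdn_divisors // => s_mp.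
  by rewrite moebius_mul_prime ?(dvdn_gt0 mp_gt0 s_mp) //; case: (p %| s); rewrite ?intrN.
have -> : (\sum_(i <- divisors m | ~~ (p %| i)%N) (moebius i)%:~R =
           \sum_(i <- divisors (m %/ p) | ~~ (p %| i)%N) (moebius i)%:~R :> R)%R.
  rewrite (big_divisors_dvd _ _ m_gt0 mp_m) big_seq_cond [RHS]big_seq_cond.
  apply: eq_bigl => i; rewrite -dvdn_divisors //.
  case: (boolP (p %| i)) => [|p'i]; rewrite ?andbF //= andbT; apply/idP/andP => [im | [] //].
  have ip : coprime i p by rewrite coprime_sym prime_coprime.
  by rewrite andbT; split=> //; rewrite -(Gauss_dvdl _ ip) divnK.
by rewrite -big_split big1 // => s _ /=; rewrite addNr.
Qed.

Definition moebius_transform (R : ringType) (E : nat -> R) (f : nat) : R :=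
  (\sum_(e <- divisors f) (moebius (f %/ e))%:~R * E e)%R.

Lemma sum_divisors_delta (R : ringType) m (F : nat -> R) : 0 < m ->
  (\sum_(a <- divisors m) (a == m)%:R * F a = F m)%R.
Proof.
move=> m_gt0; rewrite (bigD1_seq m) ?divisors_id ?divisors_uniq //= eqxx mul1r.
by rewrite big1 ?addr0 // => a /negPf ->; rewrite mul0r.
Qed.

Lemma divn_eq1 m a : 0 < m -> a %| m -> (m %/ a == 1) = (a == m).
Proof.
move=> m_gt0 am; apply/eqP/eqP => [ma1 | ->]; last by rewrite divnn m_gt0.
by rewrite -(divnK am) ma1 mul1n.
Qed.

Lemma sum_moebius_multiples (R : ringType) m a : 0 < m -> a %| m ->
  (\sum_(c <- divisors m | (a %| c)%N) (moebius (c %/ a))%:~R = (a == m)%:R :> R)%R.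
Proof.
move=> m_gt0 am; have a_gt0 := dvdn_gt0 m_gt0 am.
rewrite big_divisors_mul //; under eq_bigr => s _ do rewrite mulKn //.
by rewrite sum_moebius_divisors ?divn_eq1 // divn_gt0 // dvdn_leq.
Qed.

Lemma sum_moebius_transform (R : ringType) m (E : nat -> R) : 0 < m ->
  (\sum_(f <- divisors m) moebius_transform E f = E m)%R.
Proof.
move=> m_gt0; rewrite exchange_big_divisors //= -[RHS](sum_divisors_delta E m_gt0).
apply: eq_big_seq => a; rewrite -dvdn_divisors // => am.
by rewrite -big_distrl sum_moebius_multiples.
Qed.

Lemma moebius_transform_sum_divisors (R : ringType) c (Y : nat -> R) : 0 < c ->
  moebius_transform (fun b => \sum_(e <- divisors b) Y e)%R c = Y c.
Proof.
move=> c_gt0; rewrite /moebius_transform.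
under eq_bigr => b _ do rewrite big_distrr.
rewrite exchange_big_divisors //= -[RHS](sum_divisors_delta Y c_gt0).
apply: eq_big_seq => e; rewrite -dvdn_divisors // => ec.
rewrite -big_distrl /=; congr (_ * _)%R.
have ce_gt0 : 0 < c %/ e by rewrite divn_gt0 ?(dvdn_gt0 c_gt0 ec) // dvdn_leq.
rewrite big_divisors_mul //; under eq_bigr => s _ do rewrite divnMA.
by rewrite (big_divisors_rev (fun s => (moebius s)%:~R%R)) // sum_moebius_divisors // divn_eq1.
Qed.

Lemma sum_totient_dvdn_gcd b m : 0 < b -> 0 < m ->
  \sum_(e <- divisors b | e %| m) totient e = gcdn b m.
Proof.
move=> b_gt0 m_gt0; have g_gt0 : 0 < gcdn b m by rewrite gcdn_gt0 b_gt0.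
rewrite -[RHS]sum_totient_dvd -big_divisors_ord //.
rewrite (big_divisors_dvd _ _ b_gt0 (dvdn_gcdl b m)) big_seq_cond [RHS]big_seq_cond.
by apply: eq_bigl => e; rewrite dvdn_gcd -dvdn_divisors // andbT; case: (e %| b).
Qed.

Lemma sum_dvdn_ord n q : q %| n -> \sum_(i < n) (q %| i) = n %/ q.
Proof.
move=> qn; rewrite divn_count_dvd -(big_mkord xpredT (fun i => nat_of_bool (q %| i))).
case: n qn => [|n] qn; first by rewrite big_mkord big_ord0.
by rewrite big_ltn // dvdn0 [RHS]big_nat_recr // qn addnC.
Qed.

Lemma sum_dvdn_divn_ord n m : 0 < n -> m %| n -> \sum_(i < n) (n %/ m %| i) = m.
Proof. by move=> n_gt0 mn; rewrite sum_dvdn_ord ?dvdn_div // divnA // mulKn. Qed.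

Lemma sum_dvdn_divn_gcd_ord n b m : 0 < n -> b %| n -> m %| n ->
  \sum_(i < n) ((n %/ b %| i) && (n %/ m %| i)) = gcdn b m.
Proof.
move=> n_gt0 bn mn; have g_n : gcdn b m %| n := dvdn_trans (dvdn_gcdl b m) bn.
have [b_gt0 m_gt0] := (dvdn_gt0 n_gt0 bn, dvdn_gt0 n_gt0 mn).
have g_gt0 : 0 < gcdn b m by rewrite gcdn_gt0 b_gt0.
rewrite -[RHS](sum_dvdn_divn_ord n_gt0 g_n); apply: eq_bigr => i _.
by rewrite !dvdn_divLR // -dvdn_gcd -muln_gcdr.
Qed.

Lemma div_dvdn_gcdE n m k : 0 < n -> m %| n -> (n %/ m %| k) = (n %/ gcdn n k %| m).
Proof.
move=> n_gt0 mn; have g_gt0 : 0 < gcdn n k by rewrite gcdn_gt0 n_gt0.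
rewrite !dvdn_divLR ?dvdn_gcdl ?(dvdn_gt0 n_gt0 mn) //.
by rewrite muln_gcdr dvdn_gcd (dvdn_mull _ (dvdnn n)) mulnC.
Qed.

Section ClassNumberArithmetic.
Local Open Scope ring_scope.

Lemma sum_pairs_gcd_moebius (R : comRingType) n (E : nat -> R) (P Q : pred nat) : (0 < n)%N ->
  \sum_(i < n) \sum_(j < n) (P i && Q j)%:R * E (gcdn (gcdn i j) n) =
  \sum_(f <- divisors n) moebius_transform E f
     * (\sum_(i < n) (P i && (f %| i)%N))%:R * (\sum_(j < n) (Q j && (f %| j)%N))%:R.
Proof.
move=> n_gt0.
transitivity (\sum_(i < n) \sum_(j < n) \sum_(f <- divisors n)
  moebius_transform E f * ((P i && (f %| i)%N)%:R * (Q j && (f %| j)%N)%:R)).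
  apply: eq_bigr => i _; apply: eq_bigr => j _.
  have g_gt0 : (0 < gcdn (gcdn i j) n)%N by rewrite gcdn_gt0 n_gt0 orbT.
  rewrite -(sum_moebius_transform E g_gt0) (big_divisors_dvd _ _ n_gt0 (dvdn_gcdr _ _)).
  rewrite big_distrr big_mkcond /=; apply: eq_big_seq => f; rewrite -dvdn_divisors // => fn.
  rewrite !dvdn_gcd fn andbT -natrM mulnb.
  by case: (P i); case: (Q j); case: (f %| i)%N; case: (f %| j)%N;
     rewrite /= ?mulr0 ?mulr1 ?mul1r ?mul0r.
under eq_bigr do rewrite exchange_big; rewrite exchange_big; apply: eq_bigr => f _ /=.
move: (moebius_transform E f) => M; rewrite !natr_sum -mulrA mulr_suml mulr_sumr.
apply: eq_bigr => i _.
by rewrite mulr_sumr mulr_sumr; apply: eq_bigr => j _; ring.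
Qed.

Lemma moebius_transform_gcd (R : ringType) c m : (0 < c)%N -> (0 < m)%N ->
  moebius_transform (fun b => (gcdn b m)%:R : R) c = (totient c * (c %| m))%:R.
Proof.
move=> c_gt0 m_gt0.
rewrite -(moebius_transform_sum_divisors (fun e => (totient e * (e %| m))%:R) c_gt0).
apply: eq_big_seq => b; rewrite -dvdn_divisors // => bc; congr (_ * _).
rewrite -natr_sum -sum_totient_dvdn_gcd ?(dvdn_gt0 c_gt0 bc) // big_mkcond /=.
by congr _%:R; apply: eq_bigr => e _; case: (e %| m)%N; rewrite ?muln1 ?muln0.
Qed.

Lemma natr_mul_gcd_div_lcm (R : numFieldType) m d : (0 < m)%N -> (0 < d)%N ->
  m%:R * ((gcdn m d)%:R / (lcmn m d)%:R) = (gcdn d m ^ 2)%:R / d%:R :> R.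
Proof.
move=> m_gt0 d_gt0; have g_gt0 : (0 < gcdn m d)%N by rewrite gcdn_gt0 m_gt0.
have lcm_gcd : (lcmn m d)%:R = (m * d)%:R / (gcdn m d)%:R :> R.
  by rewrite -muln_lcm_gcd natrM mulfK // pnatr_eq0 -lt0n.
rewrite lcm_gcd gcdnC natrX natrM.
by field; rewrite !pnatr_eq0 -!lt0n gcdn_gt0 d_gt0 m_gt0.
Qed.

Section ClassNumberFormulas.
Variables (R : numFieldType) (n : nat) (w T S Sstar : nat -> R).
Hypothesis n_gt0 : (0 < n)%N.
Hypothesis T_def : forall c, (c %| n)%N ->
  T c * n%:R = \sum_(m <- divisors n | (c %| m)%N) w m * m%:R.
Hypothesis S_def : forall b, (b %| n)%N ->
  S b * n%:R = \sum_(m <- divisors n) w m * (gcdn b m * m)%:R.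
Hypothesis Sstar_def : forall d, (d %| n)%N ->
  Sstar d * d%:R = \sum_(m <- divisors n) w m * (gcdn d m ^ 2)%:R.

Lemma Sstar_T d : (d %| n)%N ->
  Sstar d = n%:R * \sum_(c <- divisors n) \sum_(a <- divisors c)
              (moebius (c %/ a))%:~R * ((gcdn a d)%:R / (lcmn a d)%:R) * T c.
Proof.
move=> dn; have d_gt0 := dvdn_gt0 n_gt0 dn.
pose g a : R := (gcdn a d)%:R / (lcmn a d)%:R.
have d_neq0 : d%:R != 0 :> R by rewrite pnatr_eq0 -lt0n.
transitivity (\sum_(c <- divisors n) moebius_transform g c * (T c * n%:R)); last first.
  rewrite mulr_sumr; apply: eq_bigr => c _.
  by rewrite -big_distrl /= [RHS]mulrCA [n%:R * _]mulrC.
have T_def' c : c \in divisors n -> T c * n%:R = \sum_(m <- divisors n | (c %| m)%N) w m * m%:R.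
  by rewrite -dvdn_divisors //; apply: T_def.
under eq_big_seq => c cn do rewrite (T_def' c cn) big_distrr.
rewrite /= (exchange_big_dep xpredT) //=.
transitivity (\sum_(m <- divisors n) w m * (m%:R * g m)).
  apply: (mulIf d_neq0); rewrite Sstar_def // mulr_suml; apply: eq_big_seq => m.
  rewrite -dvdn_divisors // => mn.
  by rewrite /g natr_mul_gcd_div_lcm ?(dvdn_gt0 n_gt0 mn) // mulrA divfK.
apply: eq_big_seq => m; rewrite -dvdn_divisors // => mn; have m_gt0 := dvdn_gt0 n_gt0 mn.
rewrite -(sum_moebius_transform g m_gt0) (big_divisors_dvd _ _ n_gt0 mn) mulrA mulr_sumr.
by apply: eq_big => [c | c _]; rewrite ?andbT // mulrC.
Qed.

Lemma sum_moebius_S c : (c %| n)%N ->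
  \sum_(b <- divisors c) (moebius (c %/ b))%:~R * S b = (totient c)%:R * T c.
Proof.
move=> cn; have c_gt0 := dvdn_gt0 n_gt0 cn.
have S_def' b : b \in divisors c -> S b * n%:R = \sum_(m <- divisors n) w m * (gcdn b m * m)%:R.
  by rewrite -dvdn_divisors // => bc; apply/S_def/(dvdn_trans bc cn).
apply: (mulIf (_ : n%:R != 0)); first by rewrite pnatr_eq0 -lt0n.
rewrite -mulrA T_def // mulr_suml.
under eq_big_seq => b bc do rewrite -mulrA (S_def' b bc) big_distrr.
rewrite exchange_big /= mulr_sumr [RHS]big_mkcond /=; apply: eq_big_seq => m.
rewrite -dvdn_divisors // => mn.
transitivity (w m * m%:R * moebius_transform (fun b => (gcdn b m)%:R) c).
  by rewrite /moebius_transform mulr_sumr; apply: eq_bigr => b _; rewrite natrM; ring.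
rewrite moebius_transform_gcd ?(dvdn_gt0 n_gt0 mn) // natrM.
by case: (c %| m)%N; rewrite ?mulr1 ?mulr0 ?mul0r //; ring.
Qed.

Lemma Sstar_S d : (d %| n)%N ->
  Sstar d = n%:R * \sum_(c <- divisors n) \sum_(a <- divisors c) \sum_(b <- divisors c)
              (moebius (c %/ a) * moebius (c %/ b))%:~R / (totient c)%:R
              * ((gcdn a d)%:R / (lcmn a d)%:R) * S b.
Proof.
move=> dn; rewrite Sstar_T //; congr (_ * _); apply: eq_big_seq => c.
rewrite -dvdn_divisors // => cn; apply: eq_bigr => a _.
have phi_neq0 : (totient c)%:R != 0 :> R.
  by rewrite pnatr_eq0 -lt0n totient_gt0 (dvdn_gt0 n_gt0 cn).
rewrite -[T c](mulKf phi_neq0) -sum_moebius_S // !mulr_sumr.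
by apply: eq_bigr => b _; rewrite intrM; ring.
Qed.

End ClassNumberFormulas.

End ClassNumberArithmetic.

Section ClassCount.
Variable gT : finGroupType.
Implicit Types (L : {group gT}) (A : {set gT}) (x y : gT).

Lemma afix1_conjg_comm x y : (x \in 'Fix_'J[y])%g = (x * y == y * x)%g.
Proof. by rewrite (sameP afix1P eqP) conjg_fix; apply/commgP/eqP. Qed.

Lemma nclasses_in_mul_card L A : A \subset L -> [acts L, on A | 'J] ->
  nclasses_in L A * #|L| = \sum_(x in A) \sum_(y in L) (x * y == y * x)%g.
Proof.
move=> sAL actsA; rewrite exchange_big /=.
have -> : nclasses_in L A = #|orbit 'J L @: A|.
  apply: eq_card => C; rewrite inE; apply/andP/imsetP => [[/imsetP[x Lx ->] sxA] | [x Ax ->]].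
    by exists x; rewrite ?orbitJ //; apply: (subsetP sxA); apply: class_refl.
  split; first by rewrite orbitJ mem_classes // (subsetP sAL).
  by apply/subsetP => _ /imsetP[y Ly ->]; rewrite (acts_act actsA).
rewrite -(Frobenius_Cauchy actsA); apply: eq_bigr => y _.
rewrite -sum1_card [LHS]big_mkcond [RHS]big_mkcond; apply: eq_bigr => x _.
by rewrite in_setI afix1_conjg_comm; case: (x \in A).
Qed.

End ClassCount.

Lemma mem_cycle_expg (gT : finGroupType) (a : gT) m i : m %| #[a]%g ->
  ((a ^+ i)%g \in <[a ^+ m]>%g) = (m %| i).
Proof.
move=> m_a; apply/cycleP/dvdnP => [[t /eqP] | [t ->]]; last by exists t; rewrite mulnC expgM.
rewrite -expgM eq_expg_mod_order => /eqP e.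
by apply/dvdnP/eqP; rewrite /dvdn -(modn_dvdm i m_a) e modn_dvdm // modnMr.
Qed.

Section CyclicQuotient.
Variables (gT : finGroupType) (G H : {group gT}) (g0 : coset_of H).
Hypotheses (nsHG : (H <| G)%g) (defQ : (G / H)%g = <[g0]>%g).
Local Notation n := #[g0]%g.
Implicit Types (A B : {set gT}) (K L : {group gT}) (P Q : pred nat).

Let nHG : (G \subset 'N(H))%g := normal_norm nsHG.

Definition commuting_pairs i j : nat := \sum_(x in G) \sum_(y in G)
  [&& coset H x == (g0 ^+ i)%g, coset H y == (g0 ^+ j)%g & (x * y == y * x)%g].

Lemma commuting_pairsC i j : commuting_pairs i j = commuting_pairs j i.
Proof.
rewrite /commuting_pairs exchange_big; apply: eq_bigr => x _; apply: eq_bigr => y _.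
by rewrite andbCA [(y * x == _)%g]eq_sym.
Qed.

Lemma commuting_pairs_shear i j : commuting_pairs i j = commuting_pairs i (i + j).
Proof.
apply: eq_bigr => x Gx; rewrite [RHS](reindex_inj (mulgI x)) /=.
rewrite [RHS](eq_bigl (mem G)) => [|y]; last by rewrite groupMl.
apply: eq_bigr => y Gy; case: eqP => //= cx.
have [Nx Ny] := (subsetP nHG x Gx, subsetP nHG y Gy).
rewrite morphM //= cx expgD !(inj_eq (mulgI _)).
by rewrite -mulgA (inj_eq (mulgI _)).
Qed.

Lemma commuting_pairs_order i : commuting_pairs i n = commuting_pairs i 0.
Proof. by rewrite /commuting_pairs expg_order expg0. Qed.

Lemma commuting_pairs_gcd i j : commuting_pairs i j = commuting_pairs (gcdn i j) 0.
Proof.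
elim: {i j}(i + j) {-2}i {-2}j (leqnn (i + j)) => [|k IHk] i j.
  by rewrite leqn0 addn_eq0 => /andP[/eqP-> /eqP->]; rewrite gcdn0.
move=> ijk; have [-> | i_gt0] := posnP i; first by rewrite gcd0n commuting_pairsC.
have [-> | j_gt0] := posnP j; first by rewrite gcdn0.
have [le_ij | lt_ji] := leqP i j.
  by rewrite -(subnKC le_ij) -commuting_pairs_shear IHk ?gcdnDl //; lia.
by rewrite commuting_pairsC gcdnC -(subnKC (ltnW lt_ji)) -commuting_pairs_shear IHk ?gcdnDl //; lia.
Qed.

Lemma commuting_pairs_gcd_order i j : commuting_pairs i j = commuting_pairs (gcdn (gcdn i j) n) 0.
Proof. by rewrite commuting_pairs_gcd -commuting_pairs_order commuting_pairs_gcd. Qed.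

Lemma coset_index x : x \in G -> exists2 i, i < n & coset H x = (g0 ^+ i)%g.
Proof.
move=> Gx; have /cyclePmin[i lt_i_n ->] : coset H x \in <[g0]>%g by rewrite -defQ mem_quotient.
by exists i.
Qed.

Definition coset_indexed A P :=
  forall x i, x \in G -> i < n -> coset H x = (g0 ^+ i)%g -> (x \in A) = P i.

Lemma eq_expg_index i j : i < n -> j < n -> ((g0 ^+ i)%g == (g0 ^+ j)%g) = (i == j).
Proof. by move=> lt_i_n lt_j_n; rewrite eq_expg_mod_order !modn_small. Qed.

Lemma mem_coset_indexed A P x : coset_indexed A P -> x \in G ->
  (x \in A) = \sum_(i < n) ((coset H x == (g0 ^+ i)%g) && P i) :> nat.
Proof.
move=> AP Gx; have [k lt_k_n cx] := coset_index Gx.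
rewrite (bigD1 (Ordinal lt_k_n)) //= cx eqxx (AP x k) // big1 ?addn0 // => i.
by rewrite eq_expg_index // -val_eqE eq_sym => /negPf->.
Qed.

Lemma sum_commuting_indexed A B P Q : A \subset G -> B \subset G ->
    coset_indexed A P -> coset_indexed B Q ->
  \sum_(x in A) \sum_(y in B) (x * y == y * x)%g =
  \sum_(i < n) \sum_(j < n) (P i && Q j) * commuting_pairs i j.
Proof.
move=> sAG sBG AP BQ.
have restrict (C : {set gT}) (F : gT -> nat) :
    C \subset G -> \sum_(x in C) F x = \sum_(x in G) (x \in C) * F x.
  move=> sCG; rewrite big_mkcond [RHS]big_mkcond; apply: eq_bigr => x _.
  by case: (boolP (x \in C)) => [/(subsetP sCG)-> | _]; rewrite ?mul1n ?if_same.
rewrite restrict //; under eq_bigr => x _ do rewrite restrict // big_distrr.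
transitivity (\sum_(x in G) \sum_(y in G) \sum_(i < n) \sum_(j < n)
  (P i && Q j) * [&& coset H x == (g0 ^+ i)%g, coset H y == (g0 ^+ j)%g & (x * y == y * x)%g]).
  apply: eq_bigr => x Gx; apply: eq_bigr => y Gy.
  rewrite (mem_coset_indexed AP Gx) (mem_coset_indexed BQ Gy) big_distrl; apply: eq_bigr => i _.
  rewrite big_distrl big_distrr; apply: eq_bigr => j _ /=.
  by rewrite -!mulnb; ring.
under eq_bigr => x _ do rewrite exchange_big.
rewrite exchange_big; apply: eq_bigr => i _.
under eq_bigr => x _ do rewrite exchange_big.
rewrite exchange_big; apply: eq_bigr => j _.
by rewrite /commuting_pairs big_distrr; apply: eq_bigr => x _; rewrite big_distrr.
Qed.

Lemma indexg_dvdn K : (H \subset K)%g -> (K \subset G)%g -> #|K : H|%g %| n.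
Proof.
move=> sHK sKG; rewrite -card_quotient ?(subset_trans sKG nHG) //.
by rewrite orderE -defQ cardSg ?quotientS.
Qed.

Lemma quotient_cycle K : (H \subset K)%g -> (K \subset G)%g ->
  (K / H)%g = <[g0 ^+ (n %/ #|K : H|)]>%g.
Proof.
move=> sHK sKG; have dn := indexg_dvdn sHK sKG.
apply/eqP; rewrite (eq_subG_cyclic (cycle_cyclic g0)) ?cycle_subG ?mem_cycle //.
  rewrite card_quotient ?(subset_trans sKG nHG) // -orderE orderXdiv ?dvdn_div //.
  by rewrite divnA // mulKn ?order_gt0.
by rewrite /= -defQ quotientS.
Qed.

Lemma coset_indexed_group : coset_indexed G predT.
Proof. by move=> x i ->. Qed.

Lemma coset_indexed_coset k : k < n -> coset_indexed (g0 ^+ k)%g (pred1 k).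
Proof.
move=> lt_k_n x i Gx lt_i_n cx; rewrite /= -eq_expg_index // -cx.
apply/idP/eqP => [/coset_mem // | <-].
by rewrite val_coset ?(subsetP nHG) // rcoset_refl.
Qed.

Lemma coset_indexed_subgroup K : (H \subset K)%g -> (K \subset G)%g ->
  coset_indexed K (fun i => n %/ #|K : H|%g %| i).
Proof.
move=> sHK sKG x i Gx _ cx; have nsHK := normalS sHK sKG nsHG.
rewrite -(@mem_cycle_expg _ g0) ?dvdn_div ?indexg_dvdn // -cx -quotient_cycle //.
by have := subsetP nHG x Gx; rewrite -{1}(quotientGK nsHK) !inE => ->.
Qed.

Lemma coset_indexed_acts A L P : A \subset G -> L \subset G -> coset_indexed A P ->
  [acts L, on A | 'J].
Proof.
move=> sAG sLG AP; apply/actsP => y Ly x /=; have Gy := subsetP sLG y Ly.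
have [Gx | G'x] := boolP (x \in G); last first.
  by rewrite !(contraNF (subsetP sAG _)) ?groupJr.
have [i lt_i_n cx] := coset_index Gx; have [j _ cy] := coset_index Gy.
rewrite (AP x i) // (AP _ i) ?groupJ //.
rewrite morphJ ?(subsetP nHG) //= cx cy; apply/eqP; rewrite conjg_fix.
by apply/commgP/commuteX2.
Qed.

Lemma indexg_group : #|G : H|%g = n.
Proof. by rewrite -card_quotient // defQ -orderE. Qed.

Lemma coset_sub_group (xbar : coset_of H) : xbar \in (G / H)%g -> (xbar : {set gT}) \subset G.
Proof.
case/morphimP => a Na Ga ->; apply/subsetP => y.
rewrite val_coset // => /rcosetP[h Hh ->].
by rewrite groupM // (subsetP (normal_sub nsHG)).
Qed.

Local Open Scope ring_scope.

Definition class_weight m : rat :=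
  moebius_transform (fun e => (commuting_pairs e 0)%:R) (n %/ m) / #|H|%:R.

Lemma nclasses_in_indexed L A P Q : (H \subset L)%g -> (L \subset G)%g -> A \subset L ->
    coset_indexed A P -> coset_indexed L Q ->
  (nclasses_in L A)%:R * #|L : H|%g%:R = \sum_(m <- divisors n) class_weight m
     * (\sum_(i < n) (P i && (n %/ m %| i)%N))%:R * (\sum_(j < n) (Q j && (n %/ m %| j)%N))%:R.
Proof.
move=> sHL sLG sAL AP LQ; have sAG := subset_trans sAL sLG.
have H_neq0 : #|H|%:R != 0 :> rat by rewrite pnatr_eq0 -lt0n cardG_gt0.
apply: (mulIf H_neq0); rewrite -mulrA -natrM mulnC Lagrange //.
rewrite -natrM nclasses_in_mul_card ?(coset_indexed_acts sAG sLG AP) //.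
rewrite (sum_commuting_indexed sAG sLG AP LQ) natr_sum.
under eq_bigr => i _ do rewrite natr_sum.
under eq_bigr => i _ do under eq_bigr => j _ do rewrite natrM commuting_pairs_gcd_order.
rewrite (sum_pairs_gcd_moebius (fun e => (commuting_pairs e 0)%:R)) ?order_gt0 //.
rewrite -big_divisors_rev ?order_gt0 // mulr_suml; apply: eq_bigr => m _.
by rewrite /class_weight; field.
Qed.

Lemma nclasses_coset (xbar : coset_of H) : xbar \in (G / H)%g ->
  (nclasses_in G xbar)%:R * n%:R =
    \sum_(m <- divisors n | (#[xbar]%g %| m)%N) class_weight m * m%:R.
Proof.
move=> Qx; have sxG := coset_sub_group Qx.
move: Qx sxG; rewrite defQ => /cyclePmin[k lt_k_n ->] skG.
have := nclasses_in_indexed (normal_sub nsHG) (subxx G) skG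
  (coset_indexed_coset lt_k_n) coset_indexed_group.
rewrite indexg_group => ->; rewrite [RHS]big_mkcond; apply: eq_big_seq => m.
rewrite -dvdn_divisors ?order_gt0 // => mn.
rewrite /= sum_dvdn_divn_ord ?order_gt0 //.
rewrite (bigD1 (Ordinal lt_k_n)) //= eqxx big1 => [|i]; last by rewrite -val_eqE /= => /negPf->.
rewrite addn0 orderXgcd -div_dvdn_gcdE ?order_gt0 //.
by case: (_ %| k)%N; rewrite ?mulr1 ?mulr0 ?mul0r.
Qed.

Lemma nclasses_subgroup K : (H \subset K)%g -> (K \subset G)%g ->
  (nclasses_in G K)%:R * n%:R =
    \sum_(m <- divisors n) class_weight m * (gcdn #|K : H|%g m * m)%:R.
Proof.
move=> sHK sKG; have := nclasses_in_indexed (normal_sub nsHG) (subxx G) sKG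
  (coset_indexed_subgroup sHK sKG) coset_indexed_group.
rewrite indexg_group => ->; apply: eq_big_seq => m; rewrite -dvdn_divisors ?order_gt0 // => mn.
by rewrite /= sum_dvdn_divn_ord ?sum_dvdn_divn_gcd_ord ?order_gt0 ?indexg_dvdn // -mulrA natrM.
Qed.

Lemma card_classes_subgroup K : (H \subset K)%g -> (K \subset G)%g ->
  #|classes K|%:R * #|K : H|%g%:R =
    \sum_(m <- divisors n) class_weight m * (gcdn #|K : H|%g m ^ 2)%:R.
Proof.
move=> sHK sKG; have KK := coset_indexed_subgroup sHK sKG.
have -> : #|classes K| = nclasses_in K K.
  by apply: eq_card => C; rewrite inE andb_idr // => /imsetP[x Kx ->]; rewrite class_subG.
rewrite (nclasses_in_indexed sHK sKG (subxx K) KK KK); apply: eq_big_seq => m.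
rewrite -dvdn_divisors ?order_gt0 // => mn.
by rewrite sum_dvdn_divn_gcd_ord ?order_gt0 ?indexg_dvdn // -mulrA natrX expr2.
Qed.

End CyclicQuotient.

Local Open Scope ring_scope.

Theorem theorem6p1 (gT : finGroupType) (G H : {group gT})
    (nHG : (H <| G)%g) (cycGH : cyclic (G / H)%g)
    (K : nat -> {group gT}) (Gamma : nat -> coset_of H) :
  let n := #|G / H|%g in
  (forall d, (d %| n)%N ->
     [/\ (H \subset K d)%g, (K d \subset G)%g & #|K d : H|%g = d]) ->
  (forall c, (c %| n)%N -> Gamma c \in (G / H)%g /\ #[Gamma c]%g = c) ->
  let T c := (nclasses_in G (set_of_coset (Gamma c)))%:R : rat in
  let S b := (nclasses_in G (K b))%:R : rat in
  let Sstar d := #|classes (K d)|%:R : rat in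
  forall d, (d %| n)%N ->
    Sstar d = n%:R * \sum_(c <- divisors n) \sum_(a <- divisors c)
                 (moebius (c %/ a))%:~R * ((gcdn a d)%:R / (lcmn a d)%:R) * T c
 /\ Sstar d = n%:R * \sum_(c <- divisors n) \sum_(a <- divisors c)
                 \sum_(b <- divisors c)
                 (moebius (c %/ a) * moebius (c %/ b))%:~R / (totient c)%:R
                 * ((gcdn a d)%:R / (lcmn a d)%:R) * S b.
Proof.
move=> n hK hGamma T S Sstar d dn.
have [g0 defQ] := cyclicP cycGH.
have n_def : n = #[g0]%g by rewrite /n defQ.
rewrite n_def in hK hGamma dn *.
have T_def c : (c %| #[g0]%g)%N ->
    T c * #[g0]%g%:R = \sum_(m <- divisors #[g0]%g | (c %| m)%N) class_weight G g0 m * m%:R.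
  by case/hGamma => QG oc; rewrite -[in RHS]oc; apply: nclasses_coset.
have S_def b : (b %| #[g0]%g)%N ->
    S b * #[g0]%g%:R = \sum_(m <- divisors #[g0]%g) class_weight G g0 m * (gcdn b m * m)%:R.
  by case/hK => sHK sKG iKH; rewrite -[in RHS]iKH; apply: nclasses_subgroup.
have Sstar_def d' : (d' %| #[g0]%g)%N ->
    Sstar d' * d'%:R = \sum_(m <- divisors #[g0]%g) class_weight G g0 m * (gcdn d' m ^ 2)%:R.
  by case/hK => sHK sKG iKH; rewrite -{2}iKH -[in RHS]iKH; apply: card_classes_subgroup.
split; first exact: (Sstar_T (order_gt0 g0) T_def Sstar_def dn).
exact: (Sstar_S (order_gt0 g0) T_def S_def Sstar_def dn).
Qed.
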